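(* Let $q>1$ and let $\rho$ be a positive $2\pi$-periodic $C^2$ function with $(\ln\rho)''(t)<\sqrt{q}/(1+\sqrt{q})$ for all $t$. For $\eta\in\mathbb{S}^1$ and $j,l\in\{1,2\}$ let $\mathcal{T}_{j,l}\eta$ be defined as follows: with $\eta_l=(-1)^{l-1}\eta$, $\theta_q=\arccos(1/\sqrt{q})$ and $h(\theta)=\frac{\sqrt{q}\sin\theta}{\sqrt{q}\cos\theta+1}$, the equation $(\ln\rho)'(\theta)=h(\theta-\theta_{\eta_l})$ has exactly two solutions $\theta\in\mathbb{R}/(2\pi\mathbb{Z})$; $\mathcal{T}_{1,l}\eta$ is the one with $\theta-\theta_{\eta_l}\in(\theta_q-\pi,\pi-\theta_q)$ and $\mathcal{T}_{2,l}\eta$ the one with $\theta-\theta_{\eta_l}\in(\pi-\theta_q,\pi+\theta_q)$ (mod $2\pi$). Then for each $\eta\in\mathbb{S}^1$ and each $l\in\{1,2\}$ (with $l+1$ taken in $\{1,2\}$ modulo $2$), $$\operatorname{sgn}\rho'(\mathcal{T}_{1,l}\eta)=(-1)^{l-1}\operatorname{sgn}\sin(\mathcal{T}_{1,l}\eta-\theta_\eta)=(-1)^{l-1}\operatorname{sgn}\sin(\mathcal{T}_{2,l+1}\eta-\theta_\eta)=\operatorname{sgn}\rho'(\mathcal{T}_{2,l+1}\eta).$$ Moreover, for each $l\in\{1,2\}$ and every $\eta\in\mathbb{S}^1$ with $\rho'(\theta_{\eta_l})\neq0$, one has $0<|\mathcal{T}_{2,l+1}\eta-\theta_{\eta_l}|<|\mathcal{T}_{1,l}\eta-\theta_{\eta_l}|<\pi-\theta_q$,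 and $$\rho(\mathcal{T}_{2,l+1}\eta)<\rho(\mathcal{T}_{1,l}\eta)\quad\text{and}\quad 0<|\sin(\mathcal{T}_{2,l+1}\eta-\theta_\eta)|<|\sin(\mathcal{T}_{1,l}\eta-\theta_\eta)|.$$
   Context: We identify $\mathbb{S}^1$ with $\mathbb{R}/(2\pi\mathbb{Z})$ via $\theta\mapsto(\cos\theta,\sin\theta)^T$; $\theta_\eta$ denotes the angular coordinate of $\eta$. Differences of angles such as $\mathcal{T}_{1,l}\eta-\theta_{\eta_l}$ and $\mathcal{T}_{2,l+1}\eta-\theta_{\eta_l}$ are taken as their representatives in $(-\pi,\pi]$ (so the first lies in $(\theta_q-\pi,\pi-\theta_q)$ and the second in $(-\theta_q,\theta_q)$). *)

From Stdlib Require Import Reals Lra.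
From Coquelicot Require Import Coquelicot.
Open Scope R_scope.

Definition theta_q (q : R) : R := acos (/ sqrt q).

Definition hfun (q th : R) : R := sqrt q * sin th / (sqrt q * cos th + 1).

Definition sgn (x : R) : R :=
  if Rlt_dec 0 x then 1 else if Rlt_dec x 0 then -1 else 0.

Definition congr2pi (x y : R) : Prop := exists k : Z, x = y + 2 * PI * IZR k.

Definition angrep (x d : R) : Prop := - PI < d <= PI /\ congr2pi x d.

(* eta in S^1 is given by its angular coordinate th_eta (any real
   representative).  eta_l = (-1)^(l-1) eta has angle th_eta + (l-1) pi. *)
Definition eta_ang (th_eta : R) (l : nat) : R := th_eta + INR (l - 1) * PI.

Definition lnext (l : nat) : nat := if Nat.eqb l 1 then 2%nat else 1%nat.

Definition dlnrho (rho : R -> R) (t : R) : R := Derive (fun s => ln (rho s)) t.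

Definition in_Tint (q : R) (j : nat) (x : R) : Prop :=
  if Nat.eqb j 1 then theta_q q - PI < x < PI - theta_q q
  else PI - theta_q q < x < PI + theta_q q.

Definition isT (q : R) (rho : R -> R) (th_eta : R) (j l : nat) (T : R) : Prop :=
  dlnrho rho T = hfun q (T - eta_ang th_eta l) /\
  exists k : Z, in_Tint q j (T - eta_ang th_eta l + 2 * PI * IZR k).

From Stdlib Require Import Reals Lra Lia ZArith.
From Coquelicot Require Import Coquelicot.
Open Scope R_scope.

(* Write [F = (ln rho)'], [s = sqrt q] and [alpha = theta_(eta_l)].  Near [alpha]
   the defining equation reads [b_j (phi) = F (alpha + phi)], where
   [b_1 (phi) = h (phi) = s sin phi / (s cos phi + 1)] on [|phi| < pi - theta_q] and,
   since [theta_(eta_(l+1)) = alpha + pi], [b_2 (phi) = h (phi + pi)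
   = s sin phi / (s cos phi - 1)] on [|phi| < theta_q].  On these windows the
   denominators are positive and [b_j' >= s / (1 + s) > F'], so
   [phi |-> b_j (phi) - F (alpha + phi)] is strictly increasing and changes sign:
   [T_(1,l)] and [T_(2,l+1)] are [alpha + p_1] and [alpha + p_2] for its unique zeros.
   Its value at [0] is [- F alpha], so [p_1], [p_2], [sin p_1], [sin p_2] and
   [rho' (T_j)] all have the sign of [F alpha].  If [F alpha > 0], then
   [b_1 < b_2] on [(0, theta_q)] forces [0 < p_2 < p_1], and [F > 0] on
   [[alpha, alpha + p_1]], whence [rho (alpha + p_2) < rho (alpha + p_1)]; the case
   [F alpha < 0] follows by the reflection [t |-> 2 alpha - t]. *)

Lemma periodic_IZR (g : R -> R) :
  (forall t, g (t + 2 * PI) = g t) -> forall t k, g (t + 2 * PI * IZR k) = g t.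
Proof.
  intros hg.
  assert (hnat : forall (n : nat) t, g (t + 2 * PI * INR n) = g t).
  { induction n as [|n IH]; intros t.
    - now rewrite Rmult_0_r, Rplus_0_r.
    - rewrite S_INR, <- (IH t), <- (hg (t + 2 * PI * INR n)). f_equal; ring. }
  intros t [|p|p].
  - now rewrite Rmult_0_r, Rplus_0_r.
  - rewrite <- (positive_nat_Z p), <- INR_IZR_INZ. apply hnat.
  - rewrite <- (hnat (Pos.to_nat p) (t + 2 * PI * IZR (Z.neg p))). f_equal.
    rewrite INR_IZR_INZ, positive_nat_Z, <- Pos2Z.opp_pos, opp_IZR. ring.
Qed.

Lemma Derive_periodic (g : R -> R) :
  (forall t, ex_derive g t) -> (forall t, g (t + 2 * PI) = g t) ->
  forall t, Derive g (t + 2 * PI) = Derive g t.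
Proof.
  intros hd hg t. symmetry.
  apply is_derive_unique, (is_derive_ext (fun x => g (x + 2 * PI))); auto.
  auto_derive; auto. apply Rmult_1_l.
Qed.

Lemma sgn_eq (x y : R) : (0 < x <-> 0 < y) -> (x < 0 <-> y < 0) -> sgn x = sgn y.
Proof.
  intros [] []. unfold sgn.
  destruct (Rlt_dec 0 x), (Rlt_dec 0 y), (Rlt_dec x 0), (Rlt_dec y 0);
    intuition lra.
Qed.

Lemma sgn_mul_pos (a x : R) : 0 < a -> sgn (a * x) = sgn x.
Proof. intros ha. apply sgn_eq; split; intros; nra. Qed.

Lemma sgn_opp (x : R) : sgn (- x) = - sgn x.
Proof.
  unfold sgn. destruct (Rlt_dec 0 (- x)), (Rlt_dec 0 x), (Rlt_dec (- x) 0), (Rlt_dec x 0);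
    lra.
Qed.

Lemma unit_mul_sgn (e x : R) : e = 1 \/ e = -1 -> e * sgn (e * x) = sgn x.
Proof.
  intros [-> | ->].
  - now rewrite !Rmult_1_l.
  - replace (-1 * x) with (- x) by ring. rewrite sgn_opp. ring.
Qed.

Lemma sgn_sin (x : R) : - PI < x < PI -> sgn (sin x) = sgn x.
Proof.
  intros hx. apply sgn_eq; split; intros h.
  - apply Rnot_le_lt; intros h'.
    destruct (Rle_lt_or_eq_dec _ _ h') as [h'' | ->]; [|rewrite sin_0 in h; lra].
    pose proof (sin_lt_0_var x); lra.
  - apply sin_gt_0; lra.
  - apply Rnot_le_lt; intros h'. pose proof (sin_ge_0 x); lra.
  - apply sin_lt_0_var; lra.
Qed.

Lemma Rabs_unit_mul (e x : R) : e = 1 \/ e = -1 -> Rabs (e * x) = Rabs x.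
Proof.
  intros he. rewrite Rabs_mult.
  destruct he as [-> | ->]; [rewrite Rabs_R1 | rewrite Rabs_left by lra]; ring.
Qed.

Lemma Rabs_sin (x : R) : - PI < x < PI -> Rabs (sin x) = sin (Rabs x).
Proof.
  intros hx. destruct (Rle_or_lt 0 x).
  - rewrite !Rabs_right; try apply Rle_ge, sin_ge_0; lra.
  - rewrite !Rabs_left, sin_neg; try apply sin_lt_0_var; lra.
Qed.

Lemma sqrt_gt_1 (x : R) : 1 < x -> 1 < sqrt x.
Proof. intros hx. rewrite <- sqrt_1. apply sqrt_lt_1; lra. Qed.

Definition branch (q b phi : R) : R := sqrt q * sin phi / (sqrt q * cos phi + b).

Definition gap (q b : R) (F : R -> R) (alpha phi : R) : R := branch q b phi - F (alpha + phi).

(* With [u = b cos phi] the right-hand side is the derivative of [branch q b];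
   its minimum, attained at [u = 1], is the constant of the hypothesis on [(ln rho)'']. *)
Lemma branch_slope_ge (s u : R) :
  1 < s -> -1 <= u <= 1 -> s * u + 1 <> 0 ->
  s / (1 + s) <= s * (s + u) / (s * u + 1) ^ 2.
Proof.
  intros hs hu hd.
  assert (hd2 : 0 < (s * u + 1) ^ 2) by (apply pow2_gt_0; exact hd).
  assert (key : 0 <= (s + u) * (1 + s) - (s * u + 1) ^ 2).
  { replace ((s + u) * (1 + s) - (s * u + 1) ^ 2)
      with ((1 - u) * (s * s * (1 + u) + s - 1)) by ring.
    apply Rmult_le_pos; nra. }
  apply Rmult_le_reg_r with ((1 + s) * (s * u + 1) ^ 2); [nra|].
  unfold Rdiv. field_simplify; nra.
Qed.

Section Branch.

Variables (q b m : R).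
Hypothesis hq : 1 < q.
Hypothesis hb : b = 1 \/ b = -1.
Hypothesis hm : 0 < m < PI.
Hypothesis hbm : sqrt q * cos m + b = 0.

Lemma branch_den_pos (phi : R) : - m < phi < m -> 0 < sqrt q * cos phi + b.
Proof.
  intros hphi. pose proof (sqrt_gt_1 q hq).
  assert (cos m < cos phi).
  { destruct (Rle_or_lt 0 phi).
    - apply cos_decreasing_1; lra.
    - rewrite <- (cos_neg phi). apply cos_decreasing_1; lra. }
  nra.
Qed.

Lemma branch_pos (phi : R) : - m < phi < m -> 0 < sin phi -> 0 < branch q b phi.
Proof.
  intros hphi hs. pose proof (sqrt_gt_1 q hq). pose proof (branch_den_pos phi hphi).
  apply Rdiv_lt_0_compat; nra.
Qed.

Variable F : R -> R.
Hypothesis hFd : forall t, ex_derive F t.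
Hypothesis hFlt : forall t, Derive F t < sqrt q / (1 + sqrt q).

Lemma is_derive_gap (alpha phi : R) : - m < phi < m ->
  is_derive (gap q b F alpha) phi
    (sqrt q * (sqrt q + b * cos phi) / (sqrt q * (b * cos phi) + 1) ^ 2
     - Derive F (alpha + phi)).
Proof.
  intros hphi. pose proof (branch_den_pos phi hphi).
  unfold gap, branch. auto_derive; [repeat split; auto; lra|].
  pose proof (sin2_cos2 phi) as e. unfold Rsqr in e.
  assert (hsq : (sqrt q * (b * cos phi) + 1) ^ 2 = (sqrt q * cos phi + b) ^ 2)
    by (destruct hb; subst; ring).
  assert (hnum : sqrt q + b * cos phi
                 = (sqrt q * cos phi + b) * cos phi + sqrt q * sin phi ^ 2)
    by (rewrite <- (Rmult_1_r (sqrt q)) at 1; rewrite <- e; ring).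
  change (Derive (fun x => F x)) with (Derive F). rewrite hsq, hnum. field. lra.
Qed.

Lemma gap_increasing (alpha x y : R) :
  - m < x -> x < y -> y < m -> gap q b F alpha x < gap q b F alpha y.
Proof.
  apply (incr_function _ (- m) m
    (fun phi => sqrt q * (sqrt q + b * cos phi) / (sqrt q * (b * cos phi) + 1) ^ 2
                - Derive F (alpha + phi))); intros phi h1 h2; simpl in h1, h2.
  - apply is_derive_gap; lra.
  - pose proof (branch_den_pos phi (conj h1 h2)).
    assert (-1 <= b * cos phi <= 1) by (pose proof (COS_bound phi); destruct hb; subst; lra).
    pose proof (branch_slope_ge (sqrt q) (b * cos phi) (sqrt_gt_1 q hq) ltac:(lra)
                  ltac:(destruct hb; subst; intro; nra)).
    pose proof (hFlt (alpha + phi)). lra.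
Qed.

Lemma gap_lt_iff (alpha x y : R) : - m < x < m -> - m < y < m ->
  x < y <-> gap q b F alpha x < gap q b F alpha y.
Proof.
  intros hx hy. split; [intros; apply gap_increasing; lra|].
  intros hlt. destruct (Rlt_or_le x y) as [| hyx]; [assumption|].
  destruct (Rle_lt_or_eq_dec _ _ hyx) as [h | ->]; [|lra].
  pose proof (gap_increasing alpha y x ltac:(lra) h ltac:(lra)). lra.
Qed.

Lemma gap_root_unique (alpha x y : R) : - m < x < m -> - m < y < m ->
  gap q b F alpha x = 0 -> gap q b F alpha y = 0 -> x = y.
Proof.
  intros hx hy gx gy.
  destruct (Rtotal_order x y) as [h | [h | h]]; [|assumption|];
    [apply (gap_lt_iff alpha) in h | apply (gap_lt_iff alpha) in h]; auto; lra.
Qed.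

(* Clearing the denominator gives a continuous function that is negative at
   [-m] and positive at [m]. *)
Lemma gap_root_exists (alpha : R) : exists phi, - m < phi < m /\ gap q b F alpha phi = 0.
Proof.
  set (k := fun phi => sqrt q * sin phi - (sqrt q * cos phi + b) * F (alpha + phi)).
  assert (hk : continuity k).
  { intros z. apply continuity_pt_filterlim, (ex_derive_continuous (V := R_NormedModule)).
    unfold k. auto_derive. apply hFd. }
  pose proof (sqrt_gt_1 q hq). assert (0 < sin m) by (apply sin_gt_0; lra).
  assert (km : k (- m) < 0) by (unfold k; rewrite cos_neg, sin_neg, hbm; nra).
  assert (kp : 0 < k m) by (unfold k; rewrite hbm; nra).
  destruct (IVT k (- m) m hk ltac:(lra) km kp) as [phi [hphi kphi]].
  assert (hphi' : - m < phi < m).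
  { split; apply Rnot_le_lt; intros h;
      [replace phi with (- m) in kphi by lra | replace phi with m in kphi by lra]; lra. }
  exists phi. split; [assumption|].
  pose proof (branch_den_pos phi hphi').
  unfold gap, branch.
  replace (F (alpha + phi)) with (sqrt q * sin phi / (sqrt q * cos phi + b)).
  - ring.
  - apply (Rmult_eq_reg_r (sqrt q * cos phi + b)); [|lra].
    unfold Rdiv. rewrite Rmult_assoc, Rinv_l by lra. unfold k in kphi. lra.
Qed.

Lemma gap_at_0 (alpha : R) : gap q b F alpha 0 = - F alpha.
Proof. unfold gap, branch. rewrite sin_0, Rplus_0_r. unfold Rdiv. ring. Qed.

Lemma gap_root_pos_iff (alpha phi : R) : - m < phi < m -> gap q b F alpha phi = 0 ->
  0 < phi <-> 0 < F alpha.
Proof.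
  intros hphi g. rewrite (gap_lt_iff alpha 0 phi), g, gap_at_0; lra.
Qed.

Lemma gap_root_neg_iff (alpha phi : R) : - m < phi < m -> gap q b F alpha phi = 0 ->
  phi < 0 <-> F alpha < 0.
Proof.
  intros hphi g. rewrite (gap_lt_iff alpha phi 0), g, gap_at_0; lra.
Qed.

Lemma sgn_at_gap_root (alpha phi : R) : - m < phi < m -> gap q b F alpha phi = 0 ->
  sgn (F (alpha + phi)) = sgn (sin phi).
Proof.
  intros hphi g. pose proof (sqrt_gt_1 q hq). pose proof (branch_den_pos phi hphi).
  replace (F (alpha + phi)) with (sqrt q / (sqrt q * cos phi + b) * sin phi).
  - apply sgn_mul_pos, Rdiv_lt_0_compat; lra.
  - unfold gap, branch in g. unfold Rdiv in *. lra.
Qed.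

Lemma sgn_sin_at_gap_root (alpha phi : R) : - m < phi < m -> gap q b F alpha phi = 0 ->
  sgn (sin phi) = sgn (F alpha).
Proof.
  intros hphi g. rewrite sgn_sin by lra.
  apply sgn_eq; [apply gap_root_pos_iff | apply gap_root_neg_iff]; assumption.
Qed.

End Branch.

Lemma theta_q_spec (q : R) : 1 < q -> 0 < theta_q q < PI / 2 /\ sqrt q * cos (theta_q q) = 1.
Proof.
  intros hq. pose proof (sqrt_gt_1 q hq).
  assert (0 < / sqrt q < 1).
  { split; [apply Rinv_0_lt_compat; lra|]. rewrite <- Rinv_1. apply Rinv_lt_contravar; lra. }
  assert (hcos : sqrt q * cos (theta_q q) = 1).
  { unfold theta_q. rewrite cos_acos by lra. field. lra. }
  split; [|assumption].
  destruct (acos_bound_lt (/ sqrt q)) as [h0 h1]; [lra|]. fold (theta_q q) in h0, h1.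
  split; [exact h0|]. apply Rnot_le_lt; intros h.
  assert (cos (theta_q q) <= 0) by (apply cos_le_0; lra). nra.
Qed.

Definition branch_sign (j : nat) : R := if Nat.eqb j 1 then 1 else -1.
Definition branch_width (q : R) (j : nat) : R :=
  if Nat.eqb j 1 then PI - theta_q q else theta_q q.
Definition branch_center (j : nat) : R := if Nat.eqb j 1 then 0 else PI.

Lemma branch_spec (q : R) (j : nat) : 1 < q -> (j = 1%nat \/ j = 2%nat) ->
  (branch_sign j = 1 \/ branch_sign j = -1) /\ 0 < branch_width q j < PI /\
  sqrt q * cos (branch_width q j) + branch_sign j = 0.
Proof.
  intros hq hj. destruct (theta_q_spec q hq) as [ht hc].
  destruct hj as [-> | ->]; cbn; (split; [auto|split; [lra|]]).
  - rewrite Rtrigo_facts.cos_pi_minus. lra.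
  - lra.
Qed.

Lemma branch_lt_branch_opp (q phi : R) : 1 < q -> 0 < phi < theta_q q ->
  branch q 1 phi < branch q (-1) phi.
Proof.
  intros hq hphi. destruct (theta_q_spec q hq) as [ht hc]. pose proof (sqrt_gt_1 q hq).
  assert (cos (theta_q q) < cos phi) by (apply cos_decreasing_1; lra).
  assert (0 < sin phi) by (apply sin_gt_0; lra).
  assert (1 < sqrt q * cos phi) by nra.
  unfold branch, Rdiv. apply Rmult_lt_compat_l; [nra|].
  apply Rinv_lt_contravar; nra.
Qed.

Lemma sin_lt_sin_theta_q (q a c : R) : 1 < q ->
  0 < a < theta_q q -> a < c < PI - theta_q q -> sin a < sin c.
Proof.
  intros hq ha hc. destruct (theta_q_spec q hq) as [ht _].
  destruct (Rle_lt_dec c (PI / 2)).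
  - apply sin_increasing_1; lra.
  - rewrite <- (sin_PI_x c). apply sin_increasing_1; lra.
Qed.

Lemma branch_roots_pos (q : R) (F L : R -> R) (alpha p1 p2 : R) : 1 < q ->
  (forall t, ex_derive F t) -> (forall t, Derive F t < sqrt q / (1 + sqrt q)) ->
  (forall t, is_derive L t (F t)) ->
  - (PI - theta_q q) < p1 < PI - theta_q q -> gap q 1 F alpha p1 = 0 ->
  - theta_q q < p2 < theta_q q -> gap q (-1) F alpha p2 = 0 ->
  0 < F alpha -> 0 < p2 < p1 /\ L (alpha + p2) < L (alpha + p1).
Proof.
  intros hq hFd hFlt hL hp1 g1 hp2 g2 hF.
  destruct (branch_spec q 1 hq (or_introl eq_refl)) as (hb1 & hm1 & hbm1).
  destruct (branch_spec q 2 hq (or_intror eq_refl)) as (hb2 & hm2 & hbm2).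
  cbn in hb1, hm1, hbm1, hb2, hm2, hbm2.
  destruct (theta_q_spec q hq) as [ht _].
  assert (h1 : 0 < p1)
    by (eapply gap_root_pos_iff with (b := 1) (m := PI - theta_q q); eauto).
  assert (h2 : 0 < p2) by (eapply gap_root_pos_iff with (b := -1) (m := theta_q q); eauto).
  assert (h21 : p2 < p1).
  { destruct (Rlt_or_le p1 (theta_q q)) as [h | h]; [|lra].
    eapply gap_lt_iff with (b := -1) (m := theta_q q); eauto; [lra|].
    pose proof (branch_lt_branch_opp q p1 hq (conj h1 h)).
    rewrite g2. unfold gap in g1 |- *. lra. }
  split; [lra|].
  apply (incr_function_le L (alpha + p2) (alpha + p1) F); cbn; auto; try lra.
  intros t ht1 ht2.
  assert (gap q 1 F alpha (t - alpha) <= 0).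
  { rewrite <- g1. destruct (Rle_lt_or_eq_dec (t - alpha) p1) as [h | ->]; [lra| |lra].
    left. eapply gap_increasing with (b := 1) (m := PI - theta_q q); eauto; lra. }
  assert (0 < branch q 1 (t - alpha))
    by (eapply branch_pos with (m := PI - theta_q q); eauto; try apply sin_gt_0; lra).
  unfold gap in *. replace (alpha + (t - alpha)) with t in * by ring. lra.
Qed.

Lemma gap_reflect (q b : R) (F : R -> R) (alpha phi : R) :
  gap q b (fun t => - F (2 * alpha - t)) alpha (- phi) = - gap q b F alpha phi.
Proof.
  unfold gap, branch. rewrite sin_neg, cos_neg.
  replace (2 * alpha - (alpha + - phi)) with (alpha + phi) by ring.
  unfold Rdiv. ring.
Qed.

Lemma is_derive_reflect (f : R -> R) (c t df : R) :
  is_derive f (c - t) df -> is_derive (fun x => f (c - x)) t (- df).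
Proof.
  intros hf. replace (- df) with (-1 * df) by ring.
  apply (is_derive_comp f (fun x => c - x)); [exact hf|].
  auto_derive; auto.
Qed.

Lemma branch_roots (q : R) (F L : R -> R) (alpha p1 p2 : R) : 1 < q ->
  (forall t, ex_derive F t) -> (forall t, Derive F t < sqrt q / (1 + sqrt q)) ->
  (forall t, is_derive L t (F t)) ->
  - (PI - theta_q q) < p1 < PI - theta_q q -> gap q 1 F alpha p1 = 0 ->
  - theta_q q < p2 < theta_q q -> gap q (-1) F alpha p2 = 0 ->
  F alpha <> 0 -> 0 < Rabs p2 < Rabs p1 /\ L (alpha + p2) < L (alpha + p1).
Proof.
  intros hq hFd hFlt hL hp1 g1 hp2 g2 hF.
  destruct (Rdichotomy _ _ hF) as [hneg | hpos].
  - set (Fr := fun t => - F (2 * alpha - t)).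
    assert (hFr : forall t, is_derive Fr t (Derive F (2 * alpha - t))).
    { intros t. unfold Fr. auto_derive; [apply hFd|].
      change (Derive (fun x => F x)) with (Derive F). unfold Rminus. ring. }
    destruct (branch_roots_pos q Fr (fun t => L (2 * alpha - t)) alpha (- p1) (- p2))
      as [hp hL']; auto; try lra.
    + intros t. exists (Derive F (2 * alpha - t)). apply hFr.
    + intros t. rewrite (is_derive_unique _ _ _ (hFr t)). apply hFlt.
    + intros t. apply is_derive_reflect, hL.
    + unfold Fr. rewrite gap_reflect, g1. lra.
    + unfold Fr. rewrite gap_reflect, g2. lra.
    + unfold Fr. replace (2 * alpha - alpha) with alpha by ring. lra.
    + replace (2 * alpha - (alpha + - p1)) with (alpha + p1) in hL' by ring.
      replace (2 * alpha - (alpha + - p2)) with (alpha + p2) in hL' by ring.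
      rewrite !Rabs_left by lra. lra.
  - destruct (branch_roots_pos q F L alpha p1 p2) as [hp hL']; auto.
    rewrite !Rabs_right by lra. lra.
Qed.

Lemma hfun_periodic_IZR (q t : R) (k : Z) : hfun q (t + 2 * PI * IZR k) = hfun q t.
Proof.
  apply periodic_IZR. intros s. unfold hfun.
  rewrite sin_plus, cos_plus, sin_2PI, cos_2PI. f_equal; f_equal; ring.
Qed.

Lemma hfun_center (q : R) (j : nat) (phi : R) : (j = 1%nat \/ j = 2%nat) ->
  hfun q (phi + branch_center j) = branch q (branch_sign j) phi.
Proof.
  intros [-> | ->]; cbn; unfold hfun, branch.
  - now rewrite Rplus_0_r.
  - rewrite neg_sin, neg_cos.
    replace (sqrt q * - cos phi + 1) with (- (sqrt q * cos phi + -1)) by ring.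
    unfold Rdiv. rewrite Rinv_opp. ring.
Qed.

Lemma in_Tint_iff (q : R) (j : nat) (x : R) : (j = 1%nat \/ j = 2%nat) ->
  in_Tint q j x <-> - branch_width q j < x - branch_center j < branch_width q j.
Proof. intros [-> | ->]; cbn; lra. Qed.

Lemma eta_ang_lnext (th : R) (l : nat) : (l = 1%nat \/ l = 2%nat) ->
  congr2pi (eta_ang th l) (eta_ang th (lnext l) + branch_center 2).
Proof.
  unfold eta_ang, lnext, branch_center. intros [-> | ->]; cbn.
  - exists (-1)%Z. ring.
  - exists 0%Z. ring.
Qed.

Lemma sin_sub_eta_ang (th p : R) (l : nat) (k : Z) : (l = 1%nat \/ l = 2%nat) ->
  sin (eta_ang th l + p + 2 * PI * IZR k - th) = (-1) ^ (l - 1) * sin p.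
Proof.
  intros hl. unfold eta_ang.
  replace (th + INR (l - 1) * PI + p + 2 * PI * IZR k - th)
    with (p + INR (l - 1) * PI + 2 * PI * IZR k) by ring.
  rewrite (periodic_IZR sin) by (intros; rewrite sin_plus, sin_2PI, cos_2PI; ring).
  destruct hl as [-> | ->]; cbn.
  - rewrite Rmult_0_l, Rplus_0_r. ring.
  - rewrite Rmult_1_l, neg_sin. ring.
Qed.

Lemma angrep_sub_offset (alpha p d : R) (k : Z) :
  angrep (alpha + p + 2 * PI * IZR k - alpha) d -> - PI < p < PI -> d = p.
Proof.
  intros [hd [n e]] hp. assert (hPI := PI_RGT_0).
  assert (hnk : (n - k)%Z = 0%Z).
  { assert (-1 < IZR (n - k) < 1) as [h1 h2] by (rewrite minus_IZR; split; nra).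
    apply lt_IZR in h1. apply lt_IZR in h2. lia. }
  apply (f_equal IZR) in hnk. rewrite minus_IZR in hnk. nra.
Qed.

Section Density.

Variables (q : R) (rho : R -> R).
Hypothesis hq : 1 < q.
Hypothesis hper : forall t, rho (t + 2 * PI) = rho t.
Hypothesis hpos : forall t, 0 < rho t.
Hypothesis hd1 : forall t, ex_derive rho t.
Hypothesis hd2 : forall t, ex_derive (Derive rho) t.
Hypothesis hconv : forall t, Derive (dlnrho rho) t < sqrt q / (1 + sqrt q).

Lemma is_derive_ln_rho (t : R) : is_derive (fun s => ln (rho s)) t (dlnrho rho t).
Proof. apply Derive_correct. auto_derive. split; auto. Qed.

Lemma dlnrho_eq (t : R) : dlnrho rho t = Derive rho t / rho t.
Proof.
  apply is_derive_unique. auto_derive; [split; auto|].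
  change (Derive (fun x => rho x)) with (Derive rho). field. apply Rgt_not_eq, hpos.
Qed.

Lemma ex_derive_dlnrho (t : R) : ex_derive (dlnrho rho) t.
Proof.
  apply (ex_derive_ext (fun s => Derive rho s / rho s)).
  { intros s. symmetry. apply dlnrho_eq. }
  apply ex_derive_div; auto. apply Rgt_not_eq, hpos.
Qed.

Lemma sgn_Derive_rho (t : R) : sgn (Derive rho t) = sgn (dlnrho rho t).
Proof.
  rewrite dlnrho_eq. unfold Rdiv. rewrite Rmult_comm.
  symmetry. apply sgn_mul_pos, Rinv_0_lt_compat, hpos.
Qed.

Lemma Derive_rho_periodic_IZR (t : R) (k : Z) : Derive rho (t + 2 * PI * IZR k) = Derive rho t.
Proof. apply periodic_IZR, Derive_periodic; assumption. Qed.

Lemma dlnrho_periodic_IZR (t : R) (k : Z) : dlnrho rho (t + 2 * PI * IZR k) = dlnrho rho t.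
Proof.
  apply periodic_IZR. unfold dlnrho. apply Derive_periodic.
  - intros s. eexists. apply is_derive_ln_rho.
  - intros s. now rewrite hper.
Qed.

Lemma isT_gap_root (th : R) (j l : nat) (T beta : R) : (j = 1%nat \/ j = 2%nat) ->
  congr2pi beta (eta_ang th l + branch_center j) -> isT q rho th j l T ->
  exists phi k, - branch_width q j < phi < branch_width q j /\
    gap q (branch_sign j) (dlnrho rho) beta phi = 0 /\ T = beta + phi + 2 * PI * IZR k.
Proof.
  intros hj [n hbeta] [hT [k0 hk0]].
  rewrite in_Tint_iff in hk0 by assumption.
  exists (T - eta_ang th l + 2 * PI * IZR k0 - branch_center j), (- (n + k0))%Z.
  split; [exact hk0|]. split.
  - unfold gap. rewrite <- hfun_center by assumption.
    replace (beta + _) with (T + 2 * PI * IZR (n + k0)) by (rewrite hbeta, plus_IZR; ring).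
    replace (T - eta_ang th l + 2 * PI * IZR k0 - branch_center j + branch_center j)
      with (T - eta_ang th l + 2 * PI * IZR k0) by ring.
    rewrite hfun_periodic_IZR, dlnrho_periodic_IZR, hT. ring.
  - rewrite hbeta, opp_IZR, plus_IZR. ring.
Qed.

Lemma gap_root_isT (th : R) (j l : nat) (phi : R) : (j = 1%nat \/ j = 2%nat) ->
  - branch_width q j < phi < branch_width q j ->
  gap q (branch_sign j) (dlnrho rho) (eta_ang th l + branch_center j) phi = 0 ->
  isT q rho th j l (eta_ang th l + branch_center j + phi).
Proof.
  intros hj hphi g. unfold isT.
  replace (eta_ang th l + branch_center j + phi - eta_ang th l)
    with (phi + branch_center j) by ring.
  split.
  - rewrite hfun_center by assumption. unfold gap in g. lra.
  - exists 0%Z. rewrite Rmult_0_r, Rplus_0_r, in_Tint_iff by assumption.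
    now replace (phi + branch_center j - branch_center j) with phi by ring.
Qed.

Lemma isT_exists_unique (th : R) (j l : nat) : (j = 1%nat \/ j = 2%nat) ->
  (exists T, isT q rho th j l T) /\
  (forall T T', isT q rho th j l T -> isT q rho th j l T' -> congr2pi T T').
Proof.
  intros hj. destruct (branch_spec q j hq hj) as (hb & hm & hbm).
  assert (hbeta : congr2pi (eta_ang th l + branch_center j) (eta_ang th l + branch_center j))
    by (exists 0%Z; ring).
  split.
  - destruct (gap_root_exists q _ _ hq hb hm hbm (dlnrho rho) ex_derive_dlnrho
                (eta_ang th l + branch_center j)) as (phi & hphi & g).
    exists (eta_ang th l + branch_center j + phi). apply gap_root_isT; assumption.
  - intros T T' hT hT'.
    destruct (isT_gap_root th j l T _ hj hbeta hT) as (phi & k & hphi & g & ->).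
    destruct (isT_gap_root th j l T' _ hj hbeta hT') as (phi' & k' & hphi' & g' & ->).
    rewrite (gap_root_unique q _ _ hq hb hm hbm _ ex_derive_dlnrho hconv _ _ _ hphi' hphi g' g).
    exists (k - k')%Z. rewrite minus_IZR. ring.
Qed.

Lemma sgn_Derive_rho_at_gap_root (j : nat) (alpha phi : R) : (j = 1%nat \/ j = 2%nat) ->
  - branch_width q j < phi < branch_width q j ->
  gap q (branch_sign j) (dlnrho rho) alpha phi = 0 ->
  sgn (Derive rho (alpha + phi)) = sgn (sin phi).
Proof.
  intros hj hphi g. destruct (branch_spec q j hq hj) as (hb & hm & hbm).
  rewrite sgn_Derive_rho. eapply sgn_at_gap_root; eauto.
Qed.

Lemma sgn_sin_gap_roots (alpha p1 p2 : R) :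
  - (PI - theta_q q) < p1 < PI - theta_q q -> gap q 1 (dlnrho rho) alpha p1 = 0 ->
  - theta_q q < p2 < theta_q q -> gap q (-1) (dlnrho rho) alpha p2 = 0 ->
  sgn (sin p1) = sgn (sin p2).
Proof.
  intros hp1 g1 hp2 g2.
  destruct (branch_spec q 1 hq (or_introl eq_refl)) as (hb1 & hm1 & hbm1).
  destruct (branch_spec q 2 hq (or_intror eq_refl)) as (hb2 & hm2 & hbm2).
  rewrite (sgn_sin_at_gap_root q 1 _ hq hb1 hm1 hbm1 _ ex_derive_dlnrho hconv _ _ hp1 g1).
  exact (eq_sym
    (sgn_sin_at_gap_root q (-1) _ hq hb2 hm2 hbm2 _ ex_derive_dlnrho hconv _ _ hp2 g2)).
Qed.

Lemma gap_roots_compare (alpha p1 p2 : R) :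
  - (PI - theta_q q) < p1 < PI - theta_q q -> gap q 1 (dlnrho rho) alpha p1 = 0 ->
  - theta_q q < p2 < theta_q q -> gap q (-1) (dlnrho rho) alpha p2 = 0 ->
  Derive rho alpha <> 0 ->
  0 < Rabs p2 < Rabs p1 /\ Rabs p1 < PI - theta_q q /\
  rho (alpha + p2) < rho (alpha + p1) /\ 0 < Rabs (sin p2) < Rabs (sin p1).
Proof.
  intros hp1 g1 hp2 g2 hD. destruct (theta_q_spec q hq) as [ht _].
  assert (hF : dlnrho rho alpha <> 0).
  { rewrite dlnrho_eq. unfold Rdiv. apply Rmult_integral_contrapositive.
    split; [exact hD|]. apply Rinv_neq_0_compat, Rgt_not_eq, hpos. }
  destruct (branch_roots q (dlnrho rho) (fun s => ln (rho s)) alpha p1 p2)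
    as [hp hL]; auto using ex_derive_dlnrho, is_derive_ln_rho.
  assert (Rabs p1 < PI - theta_q q) by (apply Rabs_def1; lra).
  assert (Rabs p2 < theta_q q) by (apply Rabs_def1; lra).
  split; [exact hp|]. split; [assumption|]. split; [apply ln_lt_inv; auto|].
  rewrite !Rabs_sin by lra.
  split; [apply sin_gt_0 | apply (sin_lt_sin_theta_q q)]; lra.
Qed.

End Density.

Theorem lemma6 (q : R) (rho : R -> R)
  (hq : 1 < q)
  (hper : forall t, rho (t + 2 * PI) = rho t)
  (hpos : forall t, 0 < rho t)
  (hd1 : forall t, ex_derive rho t)
  (hd2 : forall t, ex_derive (Derive rho) t)
  (hc2 : forall t, continuous (Derive (Derive rho)) t)
  (hconv : forall t,
      Derive (Derive (fun s => ln (rho s))) t < sqrt q / (1 + sqrt q)) :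
  forall (th_eta : R) (l : nat), (l = 1%nat \/ l = 2%nat) ->
    (* the defining equation has exactly one solution (mod 2 pi) in each
       of the two intervals, so T_{1,l} eta and T_{2,l} eta are well defined *)
    (forall j : nat, (j = 1%nat \/ j = 2%nat) ->
       (exists T, isT q rho th_eta j l T) /\
       (forall T T', isT q rho th_eta j l T -> isT q rho th_eta j l T' ->
                     congr2pi T T')) /\
    (forall T1 T2 : R,
       isT q rho th_eta 1 l T1 -> isT q rho th_eta 2 (lnext l) T2 ->
       (sgn (Derive rho T1) = (-1) ^ (l - 1) * sgn (sin (T1 - th_eta)) /\
        (-1) ^ (l - 1) * sgn (sin (T1 - th_eta))
          = (-1) ^ (l - 1) * sgn (sin (T2 - th_eta)) /\
        (-1) ^ (l - 1) * sgn (sin (T2 - th_eta)) = sgn (Derive rho T2)) /\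
       (Derive rho (eta_ang th_eta l) <> 0 ->
          (forall d1 d2 : R,
             angrep (T1 - eta_ang th_eta l) d1 ->
             angrep (T2 - eta_ang th_eta l) d2 ->
             0 < Rabs d2 /\ Rabs d2 < Rabs d1 /\ Rabs d1 < PI - theta_q q) /\
          rho T2 < rho T1 /\
          0 < Rabs (sin (T2 - th_eta)) /\
          Rabs (sin (T2 - th_eta)) < Rabs (sin (T1 - th_eta)))).
Proof.
  intros th l hl.
  split; [exact (fun j hj => isT_exists_unique q rho hq hper hpos hd1 hd2 hconv th j l hj)|].
  intros T1 T2 hT1 hT2.
  assert (halpha : congr2pi (eta_ang th l) (eta_ang th l + branch_center 1))
    by (exists 0%Z; change (branch_center 1) with 0; ring).
  destruct (isT_gap_root q rho hper hpos hd1 th 1 l T1 _ (or_introl eq_refl) halpha hT1)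
    as (p1 & k1 & hp1 & g1 & ->).
  destruct (isT_gap_root q rho hper hpos hd1 th 2 (lnext l) T2 _ (or_intror eq_refl)
              (eta_ang_lnext th l hl) hT2) as (p2 & k2 & hp2 & g2 & ->).
  assert (he : (-1) ^ (l - 1) = 1 \/ (-1) ^ (l - 1) = -1)
    by (destruct hl as [-> | ->]; [left | right]; simpl; ring).
  rewrite !sin_sub_eta_ang, !unit_mul_sgn, !Rabs_unit_mul by assumption.
  rewrite !(Derive_rho_periodic_IZR rho hper hd1), !(periodic_IZR rho hper).
  rewrite (sgn_Derive_rho_at_gap_root q rho hq hpos hd1 1 _ p1 (or_introl eq_refl) hp1 g1),
    (sgn_Derive_rho_at_gap_root q rho hq hpos hd1 2 _ p2 (or_intror eq_refl) hp2 g2).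
  split.
  { split; [reflexivity | split; [|reflexivity]].
    exact (sgn_sin_gap_roots q rho hq hpos hd1 hd2 hconv _ p1 p2 hp1 g1 hp2 g2). }
  intros hD.
  destruct (gap_roots_compare q rho hq hpos hd1 hd2 hconv _ p1 p2 hp1 g1 hp2 g2 hD)
    as (hp & hp1max & hrho & hsin).
  split; [|split; assumption].
  intros d1 d2 h1 h2. destruct (theta_q_spec q hq) as [ht _]. cbn in hp1, hp2.
  rewrite (angrep_sub_offset _ p1 d1 k1 h1), (angrep_sub_offset _ p2 d2 k2 h2) by lra.
  tauto.
Qed.
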